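(* Let $\Gamma$ be a discrete subgroup of $E(n)$, and let $(G,V)$ be a finite index cocompact translation pair of $\Gamma$. Then \[ N_\Gamma(r)=\Theta(N_G(r))=\Theta(N_G^V(r))=\Theta(r^{\dim V})=\Theta(r^{\dim\Gamma}). \] In particular, $\dim\Gamma=k$ if and only if $N_\Gamma(r)=\Theta(r^k)$.
   Context: $E(n)$ denotes the group of isometries of $\mathbb{R}^n$; each $\gamma\in E(n)$ has the form $x\mapsto Ax+a$ with $A\in O(n)$, $a\in\mathbb{R}^n$, and $T(\gamma)=a$. $E(n)$ has the topology of $O(n)\times\mathbb{R}^n$. For a discrete $\Gamma\le E(n)$, a subgroup $G\le\Gamma$ and an affine subspace $V$, $(G,V)$ is a cocompact translation pair of $\Gamma$ if $gV=V$ and $g|_V$ is a translation of $V$, with translation vector $T_V(g)$, for all $g\in G$, and $V/G$ is compact; it is a finite index cocompact translation pair if moreover $[\Gamma:G]<\infty$. $\dim\Gamma:=\dim V$ for any finite index cocompact translation pair (independent of choice). For a discrete group $H\le E(n)$, $N_H(r)$ is the number of $\gamma\in H$ with $|T(\gamma)|\le r$; $N_G^V(r)$ is the number of $\gamma\in G$ with $|T_V(\gamma)|\le r$. For $f,g\colon[0,\infty)\to[0,\infty)$, $f=O(g)$ means $\limsup_{t\to\infty}f(t)/g(t)<\infty$, and $f=\Theta(g)$ means $f=O(g)$ and $g=O(f)$. *)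

From Stdlib Require Import Reals Lra List ClassicalEpsilon.
Import ListNotations.
Open Scope R_scope.

(* Points of R^n are represented as functions nat -> R which vanish at
   coordinates >= n. *)
Definition Vec := nat -> R.
Definition Mat := nat -> nat -> R.

Definition rsum (m : nat) (f : nat -> R) : R :=
  fold_right Rplus 0 (map f (seq 0 m)).

Definition in_Rn (n : nat) (x : Vec) : Prop := forall i, (n <= i)%nat -> x i = 0.

Definition vnorm (n : nat) (x : Vec) : R := sqrt (rsum n (fun i => x i ^ 2)).
Definition vadd (x y : Vec) : Vec := fun i => x i + y i.
Definition vsub (x y : Vec) : Vec := fun i => x i - y i.

(* An element of E(n): x |-> A x + a, stored as the pair (A, a). *)
Definition Isom := (Mat * Vec)%type.

Definition in_En (n : nat) (g : Isom) : Prop :=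
  (forall i j, ((n <= i)%nat \/ (n <= j)%nat) -> fst g i j = 0) /\
  in_Rn n (snd g) /\
  (forall i j, (i < n)%nat -> (j < n)%nat ->
     rsum n (fun l => fst g l i * fst g l j) = if Nat.eqb i j then 1 else 0).

Definition act (n : nat) (g : Isom) (x : Vec) : Vec :=
  fun i => rsum n (fun j => fst g i j * x j) + snd g i.

Definition Tr (g : Isom) : Vec := snd g.

Definition id_isom (n : nat) : Isom :=
  (fun i j => if andb (Nat.ltb i n) (Nat.eqb i j) then 1 else 0, fun _ => 0).

Definition comp_isom (n : nat) (g h : Isom) : Isom :=
  (fun i j => rsum n (fun l => fst g i l * fst h l j), act n g (snd h)).

Definition inv_isom (n : nat) (g : Isom) : Isom :=
  (fun i j => fst g j i,
   fun i => - rsum n (fun j => fst g j i * snd g j)).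

Definition subgroup (n : nat) (H : Isom -> Prop) : Prop :=
  (forall g, H g -> in_En n g) /\
  H (id_isom n) /\
  (forall g h, H g -> H h -> H (comp_isom n g h)) /\
  (forall g, H g -> H (inv_isom n g)).

(* distance in E(n) with the topology of O(n) x R^n (a product metric) *)
Definition isom_close (n : nat) (eps : R) (g h : Isom) : Prop :=
  (forall i j, (i < n)%nat -> (j < n)%nat -> Rabs (fst g i j - fst h i j) < eps) /\
  (forall i, (i < n)%nat -> Rabs (snd g i - snd h i) < eps).

Definition discrete_subgroup (n : nat) (Gam : Isom -> Prop) : Prop :=
  subgroup n Gam /\
  forall g, Gam g -> exists eps, 0 < eps /\
    forall h, Gam h -> isom_close n eps g h -> h = g.

Definition affine_subspace (n k : nat) (V : Vec -> Prop) : Prop :=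
  exists (p : Vec) (b : nat -> Vec),
    in_Rn n p /\ (forall i, (i < k)%nat -> in_Rn n (b i)) /\
    (forall c : nat -> R, (forall j, rsum k (fun i => c i * b i j) = 0) ->
        forall i, (i < k)%nat -> c i = 0) /\
    (forall x, V x <-> exists c : nat -> R,
        x = fun j => p j + rsum k (fun i => c i * b i j)).

Definition translates_V_by (n : nat) (V : Vec -> Prop) (g : Isom) (t : Vec) : Prop :=
  forall x, V x -> act n g x = vadd x t.

(* (G, V) is a cocompact translation pair of Gamma.  "V/G compact" is rendered
   as: there is a bounded (equivalently, with closure compact) set K in V whose
   G-translates cover V. *)
Definition cocompact_translation_pair (n : nat) (Gam G : Isom -> Prop)
    (V : Vec -> Prop) : Prop :=
  subgroup n G /\ (forall g, G g -> Gam g) /\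
  (forall g, G g ->
     (forall x, V x -> V (act n g x)) /\
     (forall y, V y -> exists x, V x /\ act n g x = y) /\
     (exists t, translates_V_by n V g t)) /\
  (exists (K : Vec -> Prop) (M : R),
     (forall y, K y -> V y) /\ (forall y, K y -> vnorm n y <= M) /\
     (forall x, V x -> exists g y, G g /\ K y /\ act n g y = x)).

Definition finite_index (n : nat) (Gam G : Isom -> Prop) : Prop :=
  exists l : list Isom, (forall c, In c l -> Gam c) /\
    forall g, Gam g -> exists c h, In c l /\ G h /\ g = comp_isom n c h.

Definition fi_cocompact_translation_pair (n : nat) (Gam G : Isom -> Prop)
    (V : Vec -> Prop) : Prop :=
  cocompact_translation_pair n Gam G V /\ finite_index n Gam G.

Definition dim_Gamma (n : nat) (Gam : Isom -> Prop) (d : nat) : Prop :=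
  exists G V, affine_subspace n d V /\ fi_cocompact_translation_pair n Gam G V.

(* number of elements of a (finite) predicate; 0 if it is infinite *)
Definition card_of {T : Type} (P : T -> Prop) : nat :=
  match excluded_middle_informative
          (exists l : list T, NoDup l /\ forall x, In x l <-> P x) with
  | left H => length (proj1_sig (constructive_indefinite_description _ H))
  | right _ => 0%nat
  end.

Definition N_count (n : nat) (H : Isom -> Prop) (r : R) : R :=
  INR (card_of (fun g => H g /\ vnorm n (Tr g) <= r)).

Definition NV_count (n : nat) (G : Isom -> Prop) (V : Vec -> Prop) (r : R) : R :=
  INR (card_of (fun g => G g /\
         exists t, translates_V_by n V g t /\ vnorm n t <= r)).

Definition bigO (f g : R -> R) : Prop :=
  exists C T0, forall t, T0 <= t -> f t / g t <= C.

Definition bigTheta (f g : R -> R) : Prop := bigO f g /\ bigO g f.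

(** Γ is uniformly discrete: the isolation of the identity propagates to all of Γ by
   left translation.  Hence two elements of G whose linear parts agree up to a fine
   mesh and whose translation vectors along V have coordinates agreeing up to a fine
   mesh coincide, and rounding injects the elements of G translating V by at most r
   into O(r^k) integer codes, k = dim V.  Conversely, since G-translates of a bounded
   set K cover V, every point of a grid in V of mesh σ is the image of a point of K
   under some element of G; once σ exceeds the coordinate diameter of K these elements
   are pairwise distinct, which gives at least (r/D)^k elements whose translations
   are at most r.  On G the vectors T(g) and T_V(g) differ by a bounded amount, and Γ
   is a finite union of cosets c G, so all three counting functions lie between two
   multiples of r^k; finally the exponent of such polynomial growth is unique. *)

From Stdlib Require Import Reals Lra Lia Arith List ZArith ClassicalEpsilon FunctionalExtensionality.
From mathcomp Require all_boot all_algebra Rstruct.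
Import ListNotations.
Open Scope R_scope.

Definition delta (i j : nat) : R := if Nat.eqb i j then 1 else 0.

Lemma delta_sym i j : delta i j = delta j i.
Proof. unfold delta. rewrite Nat.eqb_sym. reflexivity. Qed.

Lemma rsum_S m f : rsum (S m) f = rsum m f + f m.
Proof.
  unfold rsum. rewrite seq_S, map_app, fold_right_app. simpl.
  generalize (f m). intro c.
  induction (map f (seq 0 m)) as [|a l IH]; simpl; [lra|]. rewrite IH. lra.
Qed.

Lemma rsum_ext m f g : (forall i, (i < m)%nat -> f i = g i) -> rsum m f = rsum m g.
Proof.
  induction m; intros H; [reflexivity|]. rewrite !rsum_S, IHm by (intros; apply H; lia).
  rewrite H by lia. reflexivity.
Qed.

Lemma rsum_plus m f g : rsum m (fun i => f i + g i) = rsum m f + rsum m g.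
Proof. induction m; [unfold rsum; simpl; lra|]. rewrite !rsum_S, IHm. lra. Qed.

Lemma rsum_minus m f g : rsum m (fun i => f i - g i) = rsum m f - rsum m g.
Proof. induction m; [unfold rsum; simpl; lra|]. rewrite !rsum_S, IHm. lra. Qed.

Lemma rsum_scal m c f : rsum m (fun i => c * f i) = c * rsum m f.
Proof. induction m; [unfold rsum; simpl; lra|]. rewrite !rsum_S, IHm. lra. Qed.

Lemma rsum_scal_r m c f : rsum m (fun i => f i * c) = rsum m f * c.
Proof. induction m; [unfold rsum; simpl; lra|]. rewrite !rsum_S, IHm. lra. Qed.

Lemma rsum_const m c : rsum m (fun _ => c) = INR m * c.
Proof. induction m; [unfold rsum; simpl; lra|]. rewrite !rsum_S, IHm, S_INR. lra. Qed.

Lemma rsum_eq0 m f : (forall i, (i < m)%nat -> f i = 0) -> rsum m f = 0.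
Proof. intros H. rewrite (rsum_ext m f (fun _ => 0)) by exact H. rewrite rsum_const. ring. Qed.

Lemma rsum_swap n m (f : nat -> nat -> R) :
  rsum n (fun i => rsum m (fun j => f i j)) = rsum m (fun j => rsum n (fun i => f i j)).
Proof.
  induction n.
  - symmetry. apply rsum_eq0. reflexivity.
  - rewrite rsum_S, IHn, <- rsum_plus. apply rsum_ext. intros. rewrite rsum_S. reflexivity.
Qed.

Lemma rsum_le m f g : (forall i, (i < m)%nat -> f i <= g i) -> rsum m f <= rsum m g.
Proof.
  induction m; intros H; [unfold rsum; simpl; lra|]. rewrite !rsum_S.
  assert (f m <= g m) by (apply H; lia).
  assert (rsum m f <= rsum m g) by (apply IHm; intros; apply H; lia). lra.
Qed.

Lemma rsum_abs m f : Rabs (rsum m f) <= rsum m (fun i => Rabs (f i)).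
Proof.
  induction m; [unfold rsum; simpl; rewrite Rabs_R0; lra|]. rewrite !rsum_S.
  eapply Rle_trans; [apply Rabs_triang|]. lra.
Qed.

Lemma rsum_nonneg m f : (forall i, (i < m)%nat -> 0 <= f i) -> 0 <= rsum m f.
Proof.
  intros H. rewrite <- (Rmult_0_r (INR m)), <- rsum_const. apply rsum_le. auto.
Qed.

Lemma rsum_term_le m f j : (forall i, (i < m)%nat -> 0 <= f i) -> (j < m)%nat -> f j <= rsum m f.
Proof.
  induction m; intros H Hj; [lia|]. rewrite rsum_S.
  assert (0 <= f m) by (apply H; lia).
  destruct (Nat.eq_dec j m) as [->|ne].
  - assert (0 <= rsum m f) by (apply rsum_nonneg; intros; apply H; lia). lra.
  - assert (f j <= rsum m f) by (apply IHm; [intros; apply H|]; lia). lra.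
Qed.

Lemma rsum_abs_term_le m f j : (j < m)%nat -> Rabs (f j) <= rsum m (fun i => Rabs (f i)).
Proof. intros Hj. apply (rsum_term_le m (fun i => Rabs (f i))); auto. intros; apply Rabs_pos. Qed.

Lemma rsum_delta_l m i f : (i < m)%nat -> rsum m (fun l => delta i l * f l) = f i.
Proof.
  induction m; intros Hi; [lia|]. rewrite rsum_S. unfold delta at 2.
  destruct (Nat.eq_dec i m) as [->|ne].
  - rewrite Nat.eqb_refl, rsum_eq0; [ring|].
    intros l Hl. unfold delta. replace (Nat.eqb m l) with false by (symmetry; apply Nat.eqb_neq; lia). ring.
  - replace (Nat.eqb i m) with false by (symmetry; apply Nat.eqb_neq; lia). rewrite IHm by lia. ring.
Qed.

Lemma rsum_delta_r m i f : (i < m)%nat -> rsum m (fun l => f l * delta l i) = f i.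
Proof.
  intros Hi. rewrite <- (rsum_delta_l m i f Hi). apply rsum_ext. intros. rewrite delta_sym. ring.
Qed.

Module SquareMatrix.
Import all_boot all_algebra Rstruct.
Import GRing.Theory.
Local Open Scope ring_scope.

Lemma rsum_big m f : rsum m f = \sum_(i < m) f i.
Proof.
  elim: m => [|m IH]; first by rewrite big_ord0.
  by rewrite rsum_S big_ord_recr /= IH.
Qed.

Definition mx_of {m : nat} (P : nat -> nat -> R) : 'M[R]_m := \matrix_(i < m, j < m) P i j.

Lemma mx_ofM m (P Q : nat -> nat -> R) (i j : 'I_m) :
  (mx_of P *m mx_of Q) i j = rsum m (fun l => Rmult (P i l) (Q l j)).
Proof. rewrite !mxE rsum_big. apply: eq_bigr => l _. by rewrite !mxE. Qed.

Lemma delta_natr (i j : nat) : delta i j = ((i == j)%:R : R).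
Proof. rewrite /delta. by case: (PeanoNat.Nat.eqb_spec i j) => [->|/eqP/negbTE ->]; rewrite ?eqxx. Qed.

Lemma val_insub_ord {m} (i : 'I_m) : insub (val i) = Some i.
Proof. by rewrite valK. Qed.

Lemma mul_delta_comm m (P Q : nat -> nat -> R) :
  (forall i j, lt i m -> lt j m -> rsum m (fun l => Rmult (P i l) (Q l j)) = delta i j) ->
  forall i j, lt i m -> lt j m -> rsum m (fun l => Rmult (Q i l) (P l j)) = delta i j.
Proof.
  move=> H.
  have /mulmx1C E : @mx_of m P *m mx_of Q = 1%:M.
    apply/matrixP => i j. rewrite mx_ofM H; try exact/ltP. by rewrite mxE delta_natr.
  move=> i j /ltP hi /ltP hj.
  have := congr1 (fun M : 'M[R]_m => M (Ordinal hi) (Ordinal hj)) E.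
  by rewrite /= mx_ofM mxE delta_natr.
Qed.

Lemma injective_left_inverse m (M : nat -> nat -> R) :
  (forall v : nat -> R, (forall i, lt i m -> rsum m (fun j => Rmult (M i j) (v j)) = 0) ->
     forall j, lt j m -> v j = 0) ->
  exists N : nat -> nat -> R,
    forall i j, lt i m -> lt j m -> rsum m (fun l => Rmult (N i l) (M l j)) = delta i j.
Proof.
  move=> H.
  pose ext (v : 'rV[R]_m) (l : nat) := if @insub _ (fun x => (x < m)%N) 'I_m l is Some l' then v 0 l' else 0.
  have Hext (v : 'rV[R]_m) (l : 'I_m) : ext v l = v 0 l by rewrite /ext val_insub_ord.
  have /row_freeP [N HN] : row_free (@mx_of m M)^T.
    apply: inj_row_free => v Hv; apply/rowP => j.
    rewrite -Hext mxE; apply: H (@ltP _ _ (ltn_ord j)) => i /ltP hi.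
    have := congr1 (fun w : 'rV[R]_m => w 0 (Ordinal hi)) Hv.
    rewrite !mxE rsum_big => E; rewrite -[RHS]E; apply: eq_bigr => l _.
    by rewrite !mxE Hext mulrC.
  exists (fun i j => if @insub _ (fun x => (x < m)%N) 'I_m i is Some i' then
                     if @insub _ (fun x => (x < m)%N) 'I_m j is Some j' then N^T i' j' else 0 else 0).
  move=> i j /ltP hi /ltP hj.
  have := congr1 (fun X : 'M[R]_m => X (Ordinal hj) (Ordinal hi)) HN.
  rewrite !mxE rsum_big delta_natr eq_sym => E.
  have -> : insub i = Some (Ordinal hi) := val_insub_ord (Ordinal hi).
  rewrite -[i == j]/(Ordinal hi == Ordinal hj) -E.
  apply: eq_bigr => l _; by rewrite val_insub_ord !mxE mulrC.
Qed.
End SquareMatrix.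

(** * Orthogonal matrices and the isometry group *)

Definition orth_cols (n : nat) (A : Mat) : Prop :=
  forall i j, (i < n)%nat -> (j < n)%nat -> rsum n (fun l => A l i * A l j) = delta i j.
Definition orth_rows (n : nat) (A : Mat) : Prop :=
  forall i j, (i < n)%nat -> (j < n)%nat -> rsum n (fun l => A i l * A j l) = delta i j.

Lemma orth_cols_rows n A : orth_cols n A -> orth_rows n A.
Proof.
  intros H i j Hi Hj.
  apply (SquareMatrix.mul_delta_comm n (fun a b => A b a) A); auto.
Qed.

Lemma in_En_orth_cols n g : in_En n g -> orth_cols n (fst g).
Proof. intros [_ [_ H]] i j Hi Hj. rewrite H by auto. reflexivity. Qed.

Lemma orth_entry_le1 n A i j : orth_cols n A -> (i < n)%nat -> (j < n)%nat -> Rabs (A i j) <= 1.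
Proof.
  intros H Hi Hj. pose proof (H j j Hj Hj) as E. unfold delta in E. rewrite Nat.eqb_refl in E.
  assert (A i j * A i j <= 1).
  { rewrite <- E. apply (rsum_term_le n (fun l => A l j * A l j)); auto. intros. apply Rle_0_sqr. }
  apply Rabs_le. split; nra.
Qed.

Lemma orth_transpose_mul n A x i : orth_cols n A -> (i < n)%nat ->
  rsum n (fun j => A j i * rsum n (fun l => A j l * x l)) = x i.
Proof.
  intros H Hi.
  rewrite (rsum_ext n _ (fun j => rsum n (fun l => A j i * A j l * x l)))
    by (intros; rewrite <- rsum_scal; apply rsum_ext; intros; ring).
  rewrite rsum_swap, <- (rsum_delta_l n i x Hi).
  apply rsum_ext. intros l Hl. rewrite rsum_scal_r, H; auto.
Qed.

Lemma orth_mul_transpose n A x i : orth_cols n A -> (i < n)%nat ->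
  rsum n (fun j => A i j * rsum n (fun l => A l j * x l)) = x i.
Proof.
  intros H Hi. apply orth_cols_rows in H.
  rewrite (rsum_ext n _ (fun j => rsum n (fun l => A i j * A l j * x l)))
    by (intros; rewrite <- rsum_scal; apply rsum_ext; intros; ring).
  rewrite rsum_swap, <- (rsum_delta_l n i x Hi).
  apply rsum_ext. intros l Hl. rewrite rsum_scal_r, H; auto.
Qed.

Lemma orth_mul_abs_le n A x i : orth_cols n A -> (i < n)%nat ->
  Rabs (rsum n (fun j => A i j * x j)) <= rsum n (fun j => Rabs (x j)).
Proof.
  intros HA Hi. eapply Rle_trans; [apply rsum_abs|]. apply rsum_le. intros j Hj.
  rewrite Rabs_mult. pose proof (orth_entry_le1 n A i j HA Hi Hj).
  pose proof (Rabs_pos (x j)). pose proof (Rabs_pos (A i j)). nra.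
Qed.

Lemma orth_transpose_mul_abs_le n A x i : orth_cols n A -> (i < n)%nat ->
  Rabs (rsum n (fun j => A j i * x j)) <= rsum n (fun j => Rabs (x j)).
Proof.
  intros HA Hi. eapply Rle_trans; [apply rsum_abs|]. apply rsum_le. intros j Hj.
  rewrite Rabs_mult. pose proof (orth_entry_le1 n A j i HA Hj Hi).
  pose proof (Rabs_pos (x j)). pose proof (Rabs_pos (A j i)). nra.
Qed.

Lemma isom_eq (g h : Isom) : (forall i j, fst g i j = fst h i j) -> (forall i, snd g i = snd h i) -> g = h.
Proof.
  intros H1 H2. destruct g as [A a], h as [B b]; simpl in *.
  f_equal; repeat (apply functional_extensionality; intros); auto.
Qed.

Lemma act_comp n g h x i : act n (comp_isom n g h) x i = act n g (act n h x) i.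
Proof.
  unfold act, comp_isom; simpl.
  rewrite (rsum_ext n _ (fun j => rsum n (fun l => fst g i l * fst h l j * x j)))
    by (intros; rewrite rsum_scal_r; reflexivity).
  rewrite rsum_swap.
  rewrite (rsum_ext n (fun l => fst g i l * (rsum n (fun j => fst h l j * x j) + snd h l))
               (fun l => rsum n (fun j => fst g i l * fst h l j * x j) + fst g i l * snd h l)).
  - rewrite rsum_plus. unfold act. ring.
  - intros. rewrite Rmult_plus_distr_l, <- rsum_scal. f_equal. apply rsum_ext. intros. ring.
Qed.

Lemma comp_isom_assoc n g h k :
  comp_isom n (comp_isom n g h) k = comp_isom n g (comp_isom n h k).
Proof.
  apply isom_eq; simpl.
  - intros i j.
    rewrite (rsum_ext n _ (fun l => rsum n (fun m => fst g i m * fst h m l * fst k l j)))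
      by (intros; rewrite rsum_scal_r; reflexivity).
    rewrite rsum_swap. apply rsum_ext. intros m Hm.
    rewrite <- rsum_scal. apply rsum_ext. intros; ring.
  - intros i. apply act_comp.
Qed.

Lemma comp_isom_id_l n h : in_En n h -> comp_isom n (id_isom n) h = h.
Proof.
  intros [H0 [H1 _]]. apply isom_eq; unfold comp_isom, act; simpl.
  - intros i j. destruct (Nat.ltb_spec i n) as [Hi|Hi]; simpl.
    + exact (rsum_delta_l n i (fun l => fst h l j) Hi).
    + rewrite H0 by auto. apply rsum_eq0. intros; ring.
  - intros i. destruct (Nat.ltb_spec i n) as [Hi|Hi]; simpl.
    + rewrite Rplus_0_r. exact (rsum_delta_l n i (snd h) Hi).
    + rewrite H1 by auto. rewrite rsum_eq0; [ring|]. intros; ring.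
Qed.

Lemma comp_isom_id_r n g : in_En n g -> comp_isom n g (id_isom n) = g.
Proof.
  intros [H0 [H1 _]]. apply isom_eq; unfold comp_isom, act; simpl.
  - intros i j. destruct (Nat.ltb_spec j n) as [Hj|Hj].
    + rewrite <- (rsum_delta_r n j (fun l => fst g i l) Hj). apply rsum_ext. intros l Hl.
      unfold delta. replace (l <? n)%nat with true by (symmetry; apply Nat.ltb_lt; auto). reflexivity.
    + rewrite H0 by auto. apply rsum_eq0. intros l Hl.
      replace (l =? j)%nat with false by (symmetry; apply Nat.eqb_neq; lia).
      rewrite Bool.andb_false_r. ring.
  - intros i. rewrite rsum_eq0; [ring|]. intros; ring.
Qed.

Lemma comp_isom_inv_r n g : in_En n g -> comp_isom n g (inv_isom n g) = id_isom n.
Proof.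
  intros Hg. pose proof (orth_cols_rows n _ (in_En_orth_cols n g Hg)) as Hrows.
  destruct Hg as [H0 [H1 HO]]. apply isom_eq; unfold comp_isom, inv_isom, id_isom, act; simpl.
  - intros i j. destruct (Nat.ltb_spec i n) as [Hi|Hi]; simpl.
    + destruct (Nat.ltb_spec j n) as [Hj|Hj]; [apply Hrows; auto|].
      replace (i =? j)%nat with false by (symmetry; apply Nat.eqb_neq; lia).
      apply rsum_eq0. intros l Hl. rewrite (H0 j l) by auto. ring.
    + apply rsum_eq0. intros l Hl. rewrite H0 by auto. ring.
  - intros i. destruct (Nat.ltb_spec i n) as [Hi|Hi].
    + rewrite (rsum_ext n _ (fun j => -1 * (fst g i j * rsum n (fun l => fst g l j * snd g l))))
        by (intros; ring).
      rewrite rsum_scal, orth_mul_transpose; [ring| |auto]. intros a b Ha Hb. apply HO; auto.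
    + rewrite H1 by auto. rewrite rsum_eq0; [ring|]. intros j Hj. rewrite H0 by auto. ring.
Qed.

Lemma comp_isom_inv_eq_id n g h : in_En n g -> in_En n h ->
  comp_isom n (inv_isom n g) h = id_isom n -> h = g.
Proof.
  intros Hg Hh E.
  rewrite <- (comp_isom_id_l n h Hh), <- (comp_isom_inv_r n g Hg), comp_isom_assoc, E.
  apply comp_isom_id_r, Hg.
Qed.

(** * Uniform discreteness *)

Lemma rsum_abs_lt n x eps : 0 < eps -> (forall l, (l < n)%nat -> Rabs (x l) < eps) ->
  rsum n (fun l => Rabs (x l)) < (INR n + 1) * eps.
Proof.
  intros Heps Hx. apply Rle_lt_trans with (INR n * eps); [|lra].
  rewrite <- rsum_const. apply rsum_le. intros l Hl. left. auto.
Qed.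

Lemma isom_close_id_inv_comp n eps g h : 0 < eps -> in_En n g -> isom_close n eps g h ->
  isom_close n ((INR n + 1) * eps) (id_isom n) (comp_isom n (inv_isom n g) h).
Proof.
  intros Heps Hg [Cm Cv]. pose proof (in_En_orth_cols n g Hg) as Og.
  split; unfold comp_isom, inv_isom, id_isom, act; simpl.
  - intros i j Hi Hj.
    replace (if andb (i <? n)%nat (i =? j)%nat then 1 else 0) with (delta i j)
      by (unfold delta; replace (i <? n)%nat with true by (symmetry; apply Nat.ltb_lt; auto); reflexivity).
    rewrite <- (Og i j Hi Hj), <- rsum_minus.
    rewrite (rsum_ext n _ (fun l => fst g l i * (fst g l j - fst h l j))) by (intros; ring).
    eapply Rle_lt_trans; [apply orth_transpose_mul_abs_le; auto|].
    apply rsum_abs_lt; auto.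
  - intros i Hi.
    match goal with |- Rabs (0 - (?a + - ?b)) < _ => replace (0 - (a + - b)) with (b - a) by ring end.
    rewrite <- rsum_minus, (rsum_ext n _ (fun l => fst g l i * (snd g l - snd h l))) by (intros; ring).
    eapply Rle_lt_trans; [apply orth_transpose_mul_abs_le; auto|].
    apply rsum_abs_lt; auto.
Qed.

Lemma discrete_subgroup_uniform n Gam : discrete_subgroup n Gam ->
  exists eps, 0 < eps /\ forall g h, Gam g -> Gam h -> isom_close n eps g h -> g = h.
Proof.
  intros [[HE [Hid [Hcomp Hinv]]] Hdisc].
  destruct (Hdisc _ Hid) as [e0 [He0 Hiso]].
  assert (Hn : 0 < INR n + 1) by (pose proof (pos_INR n); lra).
  exists (e0 / (INR n + 1)). split; [apply Rdiv_lt_0_compat; lra|].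
  intros g h Hg Hh Hclose. symmetry. apply (comp_isom_inv_eq_id n); auto.
  apply Hiso; [apply (Hcomp _ _ (Hinv g Hg) Hh)|].
  replace e0 with ((INR n + 1) * (e0 / (INR n + 1))) by (field; lra).
  apply isom_close_id_inv_comp; auto. apply Rdiv_lt_0_compat; lra.
Qed.

Definition finite_pred {T} (P : T -> Prop) := exists l : list T, NoDup l /\ forall x, In x l <-> P x.

Lemma card_of_NoDup {T} (P : T -> Prop) l : NoDup l -> (forall x, In x l <-> P x) -> card_of P = length l.
Proof.
  intros Hn Hl. unfold card_of. destruct excluded_middle_informative as [H|H].
  - destruct (constructive_indefinite_description _ H) as [l' [Hn' Hl']]; simpl.
    apply Nat.le_antisymm; apply NoDup_incl_length; auto; intros x Hx.
    + apply Hl, Hl', Hx.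
    + apply Hl', Hl, Hx.
  - exfalso. apply H. exists l. auto.
Qed.

Lemma NoDup_length_le_card_of {T} (P : T -> Prop) l : finite_pred P -> NoDup l ->
  (forall x, In x l -> P x) -> (length l <= card_of P)%nat.
Proof.
  intros [l' [Hn' Hl']] Hn Hl. rewrite (card_of_NoDup P l' Hn' Hl').
  apply NoDup_incl_length; auto. intros x Hx. apply Hl', Hl, Hx.
Qed.

Lemma card_of_le_code {T U} (P : T -> Prop) (code : T -> U) (L : list U) :
  (forall x, P x -> In (code x) L) -> (forall x y, P x -> P y -> code x = code y -> x = y) ->
  finite_pred P /\ (card_of P <= length L)%nat.
Proof.
  intros HL Hinj.
  pose (decode := fun u => match excluded_middle_informative (exists x, P x /\ code x = u) with
                   | left H => [proj1_sig (constructive_indefinite_description _ H)]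
                   | right _ => [] end).
  assert (Hdecode : forall u x, In x (decode u) <-> P x /\ code x = u).
  { intros u x. unfold decode. destruct excluded_middle_informative as [H|H]; simpl.
    - destruct (proj2_sig (constructive_indefinite_description _ H)) as [Py Fy].
      split; [intros [<-|[]]; auto|]. intros [Px <-]. left. apply Hinj; auto.
    - split; [intros []|]. intros Hx. apply H. exists x. exact Hx. }
  assert (dec : forall x y : T, {x = y} + {x <> y}) by (intros; apply excluded_middle_informative).
  pose (l := nodup dec (flat_map decode L)).
  assert (Hmem : forall x, In x l <-> P x).
  { intros x. unfold l. rewrite nodup_In, in_flat_map. split.
    - intros [u [_ Hu]]. apply Hdecode in Hu. apply Hu.
    - intros Px. exists (code x). split; [auto|]. apply Hdecode. auto. }
  split; [exists l; split; [apply NoDup_nodup|exact Hmem]|].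
  rewrite (card_of_NoDup P l (NoDup_nodup _ _) Hmem).
  eapply Nat.le_trans; [apply NoDup_incl_length; [apply NoDup_nodup|]|].
  - intros x Hx. unfold l in Hx. apply nodup_In in Hx. exact Hx.
  - assert (Hlen : forall u, (length (decode u) <= 1)%nat)
      by (intros u; unfold decode; destruct excluded_middle_informative; simpl; lia).
    clear -Hlen. induction L as [|u L IH]; simpl; [lia|].
    rewrite length_app. specialize (Hlen u). lia.
Qed.

Definition digit (N i j : nat) : nat := (j / N ^ i) mod N.

Lemma digit_lt N i j : (0 < N)%nat -> (digit N i j < N)%nat.
Proof. intros. unfold digit. apply Nat.mod_upper_bound. lia. Qed.

Lemma digits_inj N k : (0 < N)%nat -> forall j j', (j < N ^ k)%nat -> (j' < N ^ k)%nat ->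
  (forall i, (i < k)%nat -> digit N i j = digit N i j') -> j = j'.
Proof.
  intros HN. induction k as [|k IH]; intros j j' Hj Hj' H.
  - simpl in *. lia.
  - assert (E0 : (j mod N = j' mod N)%nat).
    { specialize (H 0%nat ltac:(lia)). unfold digit in H. rewrite Nat.pow_0_r, !Nat.div_1_r in H. auto. }
    assert (E1 : (j / N = j' / N)%nat).
    { apply IH.
      - apply Nat.Div0.div_lt_upper_bound. rewrite Nat.mul_comm. simpl in Hj. lia.
      - apply Nat.Div0.div_lt_upper_bound. rewrite Nat.mul_comm. simpl in Hj'. lia.
      - intros i Hi. specialize (H (S i) ltac:(lia)). unfold digit in *.
        rewrite !Nat.Div0.div_div. rewrite Nat.pow_succ_r' in H. auto. }
    rewrite (Nat.div_mod j N), (Nat.div_mod j' N) by lia. rewrite E0, E1. reflexivity.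
Qed.

Fixpoint zbox (m W : nat) : list (list Z) :=
  match m with
  | O => [[]]
  | S m' => flat_map (fun z => map (cons z) (zbox m' W))
              (map (fun i => (Z.of_nat i - Z.of_nat W)%Z) (seq 0 (2 * W + 1)))
  end.

Lemma length_zbox m W : length (zbox m W) = ((2 * W + 1) ^ m)%nat.
Proof.
  induction m as [|m IH]; [reflexivity|]. cbn [zbox].
  assert (Hr : forall r : list Z,
    length (flat_map (fun z => map (cons z) (zbox m W)) r) = (length r * (2 * W + 1) ^ m)%nat).
  { induction r as [|a r IHr]; [reflexivity|].
    cbn [flat_map length]. rewrite length_app, length_map, IHr, IH. lia. }
  rewrite Hr, length_map, length_seq. reflexivity.
Qed.

Lemma in_zbox m W l : length l = m -> (forall z, In z l -> (- Z.of_nat W <= z <= Z.of_nat W)%Z) ->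
  In l (zbox m W).
Proof.
  revert l; induction m; intros l Hl Hz.
  - destruct l; [simpl; auto|simpl in Hl; lia].
  - destruct l as [|z l]; [simpl in Hl; lia|]. simpl. apply in_flat_map. exists z.
    specialize (Hz z (or_introl eq_refl)) as Hz0. split.
    + apply in_map_iff. exists (Z.to_nat (z + Z.of_nat W)). split; [lia|]. apply in_seq. lia.
    + apply in_map. apply IHm; [simpl in Hl; lia|]. intros; apply Hz; simpl; auto.
Qed.

Lemma Int_part_eq_close x y : Int_part x = Int_part y -> Rabs (x - y) < 1.
Proof.
  intros E. pose proof (base_Int_part x). pose proof (base_Int_part y).
  rewrite E in *. apply Rabs_def1; lra.
Qed.

Lemma Int_part_abs_le x W : Rabs x <= INR W ->
  (- Z.of_nat (S W) <= Int_part x <= Z.of_nat (S W))%Z.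
Proof.
  intros H. pose proof (base_Int_part x). pose proof (Rle_abs x). pose proof (Rle_abs (- x)).
  rewrite Rabs_Ropp, INR_IZR_INZ in *. split; apply le_IZR;
    rewrite ?opp_IZR, Nat2Z.inj_succ, succ_IZR; lra.
Qed.

Definition nat_ceil (y : R) : nat := Z.to_nat (up y).

Lemma nat_ceil_spec y : 0 <= y -> y <= INR (nat_ceil y) <= y + 1.
Proof.
  intros Hy. destruct (archimed y) as [H1 H2]. unfold nat_ceil.
  assert (0 <= up y)%Z by (apply le_IZR; lra).
  rewrite INR_IZR_INZ, Z2Nat.id by auto. lra.
Qed.

Lemma INR_card_of_le_code {T U} (P : T -> Prop) (code : T -> U) (L : list U) m :
  (forall x, P x -> In (code x) L) -> (forall x y, P x -> P y -> code x = code y -> x = y) ->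
  INR (length L) <= m -> finite_pred P /\ INR (card_of P) <= m.
Proof.
  intros HL Hinj Hm. destruct (card_of_le_code P code L HL Hinj) as [Hfin Hcard].
  split; auto. apply le_INR in Hcard. lra.
Qed.

Lemma INR_eq_of_close a b : Rabs (INR a - INR b) < 1 -> a = b.
Proof.
  intros H. apply Rabs_def2 in H.
  destruct (Nat.lt_total a b) as [Hab|[Hab|Hab]]; auto.
  - apply le_INR in Hab. rewrite S_INR in Hab. lra.
  - apply le_INR in Hab. rewrite S_INR in Hab. lra.
Qed.

Lemma Rabs_sub_lt_of_div s x y : 0 < s -> Rabs (x / s - y / s) < 1 -> Rabs (x - y) < s.
Proof.
  intros Hs H. replace (x - y) with (s * (x / s - y / s)) by (field; lra).
  rewrite Rabs_mult, (Rabs_pos_eq s) by lra.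
  apply (Rmult_lt_compat_l s) in H; [|auto]. rewrite Rmult_1_r in H. exact H.
Qed.

Lemma Rabs_div_le s x y : 0 < s -> Rabs x <= y -> Rabs (x / s) <= y / s.
Proof.
  intros Hs H. unfold Rdiv. rewrite Rabs_mult, Rabs_inv, (Rabs_pos_eq s) by lra.
  apply Rmult_le_compat_r; auto. left; apply Rinv_0_lt_compat; auto.
Qed.

Lemma length_zbox_ceil_le k a r : 0 <= a -> 1 <= r ->
  INR (length (zbox k (S (nat_ceil (a * r))))) <= (2 * a + 5) ^ k * r ^ k.
Proof.
  intros Ha Hr. rewrite length_zbox, pow_INR, <- Rpow_mult_distr. apply pow_incr. split; [apply pos_INR|].
  destruct (nat_ceil_spec (a * r)) as [_ Hc]; [nra|].
  rewrite plus_INR, mult_INR, S_INR. simpl (INR 2). simpl (INR 1). rewrite S_INR. nra.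
Qed.

Lemma exists_nat_scale D r : 0 < D -> 2 * D <= r ->
  exists N, (1 <= N)%nat /\ D * INR N <= r /\ r / (2 * D) <= INR N.
Proof.
  intros HD Hr. pose proof (base_Int_part (r / D)) as [F1 F2].
  assert (Hy : 2 <= r / D) by (apply (Rmult_le_reg_r D); auto; unfold Rdiv; rewrite Rmult_assoc, Rinv_l; lra).
  assert (Hz : (1 <= Int_part (r / D))%Z) by (apply le_IZR; simpl; lra).
  exists (Z.to_nat (Int_part (r / D))).
  rewrite INR_IZR_INZ, Z2Nat.id by lia. split; [lia|]. split.
  - apply (Rmult_le_reg_r (/ D)); [apply Rinv_0_lt_compat; auto|].
    rewrite Rmult_comm, <- Rmult_assoc, Rinv_l, Rmult_1_l by lra. exact F1.
  - replace (r / (2 * D)) with (r / D / 2) by (field; lra). lra.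
Qed.

Lemma sum_map_nonneg {A} (f : A -> R) l : (forall y, 0 <= f y) -> 0 <= fold_right Rplus 0 (map f l).
Proof. intros Hf. induction l as [|y l IH]; simpl; [lra|]. pose proof (Hf y). lra. Qed.

Lemma In_le_sum_map {A} (f : A -> R) l x : (forall y, 0 <= f y) -> In x l ->
  f x <= fold_right Rplus 0 (map f l).
Proof.
  intros Hf. induction l as [|y l IH]; simpl; [intros []|].
  pose proof (sum_map_nonneg f l Hf). pose proof (Hf y).
  intros [->|Hx]; [lra|]. specialize (IH Hx). lra.
Qed.

(** * Coordinates along an affine subspace *)

Definition lin (k : nat) (c : nat -> R) (b : nat -> Vec) : Vec :=
  fun l => rsum k (fun i => c i * b i l).

Definition indep (n k : nat) (b : nat -> Vec) : Prop :=
  (forall i, (i < k)%nat -> in_Rn n (b i)) /\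
  (forall c : nat -> R, (forall j, lin k c b j = 0) -> forall i, (i < k)%nat -> c i = 0).

Definition gram (n : nat) (b : nat -> Vec) (i j : nat) : R := rsum n (fun l => b i l * b j l).

Definition bnd (n : nat) (x : Vec) (r : R) : Prop := forall l, (l < n)%nat -> Rabs (x l) <= r.

Lemma bnd_le n x r r' : bnd n x r -> r <= r' -> bnd n x r'.
Proof. intros H Hr l Hl. specialize (H l Hl). lra. Qed.

Lemma lin_minus k c c' b l : lin k (fun i => c i - c' i) b l = lin k c b l - lin k c' b l.
Proof.
  unfold lin. rewrite <- rsum_minus. apply rsum_ext. intros; ring.
Qed.

Lemma lin_abs_le n k c b s l : (forall i, (i < k)%nat -> Rabs (c i) <= s) -> (l < n)%nat ->
  Rabs (lin k c b l) <= s * rsum k (fun i => rsum n (fun l => Rabs (b i l))).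
Proof.
  intros Hc Hl. unfold lin. eapply Rle_trans; [apply rsum_abs|]. rewrite <- rsum_scal.
  apply rsum_le. intros i Hi. rewrite Rabs_mult.
  apply Rmult_le_compat; try apply Rabs_pos; auto. apply rsum_abs_term_le; auto.
Qed.

Lemma gram_quadratic n k b v :
  rsum n (fun l => lin k v b l * lin k v b l) = rsum k (fun i => v i * rsum k (fun j => gram n b i j * v j)).
Proof.
  unfold lin, gram.
  rewrite (rsum_ext n _ (fun l => rsum k (fun i => rsum k (fun j => v i * b i l * (v j * b j l))))).
  2:{ intros l Hl. rewrite <- rsum_scal_r. apply rsum_ext. intros i Hi. rewrite <- rsum_scal. reflexivity. }
  rewrite rsum_swap. apply rsum_ext. intros i Hi.
  rewrite rsum_swap, <- rsum_scal. apply rsum_ext. intros j Hj.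
  rewrite <- rsum_scal_r, <- rsum_scal. apply rsum_ext. intros; ring.
Qed.

Lemma gram_injective n k b : indep n k b ->
  forall v, (forall i, (i < k)%nat -> rsum k (fun j => gram n b i j * v j) = 0) ->
  forall j, (j < k)%nat -> v j = 0.
Proof.
  intros [Hb Hind] v Hv. apply Hind. intros l.
  destruct (le_lt_dec n l) as [Hl|Hl].
  - apply rsum_eq0. intros i Hi. rewrite (Hb i Hi l Hl). ring.
  - assert (E : rsum n (fun l => lin k v b l * lin k v b l) = 0).
    { rewrite gram_quadratic. apply rsum_eq0. intros i Hi. rewrite Hv by auto. ring. }
    assert (lin k v b l * lin k v b l <= 0).
    { rewrite <- E. apply (rsum_term_le n (fun l => lin k v b l * lin k v b l)); auto.
      intros; apply Rle_0_sqr. }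
    nra.
Qed.

(* With [N] a left inverse of the Gram matrix, the rows of [N b] form a dual basis. *)
Lemma lin_coord_dual n k b N c i :
  (forall i j, (i < k)%nat -> (j < k)%nat -> rsum k (fun l => N i l * gram n b l j) = delta i j) ->
  (i < k)%nat -> c i = rsum n (fun l => lin k (N i) b l * lin k c b l).
Proof.
  intros HN Hi. unfold lin.
  rewrite (rsum_ext n _ (fun l => rsum k (fun j => rsum k (fun m => N i j * b j l * (c m * b m l))))).
  2:{ intros l Hl. rewrite <- rsum_scal_r. apply rsum_ext. intros. rewrite <- rsum_scal. reflexivity. }
  rewrite rsum_swap.
  rewrite (rsum_ext k _ (fun j => rsum k (fun m => N i j * gram n b j m * c m))).
  2:{ intros j Hj. rewrite rsum_swap. apply rsum_ext. intros m Hm. unfold gram.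
      rewrite <- rsum_scal, <- rsum_scal_r. apply rsum_ext. intros; ring. }
  rewrite rsum_swap, <- (rsum_delta_l k i c Hi). apply rsum_ext.
  intros m Hm. rewrite <- (HN i m Hi Hm), rsum_scal_r. reflexivity.
Qed.

Definition coord_bound (n k : nat) (b : nat -> Vec) (beta : R) : Prop :=
  forall c r, 0 <= r -> bnd n (lin k c b) r -> forall i, (i < k)%nat -> Rabs (c i) <= beta * r.

Lemma lin_coord_bound n k b : indep n k b -> exists beta, 0 <= beta /\ coord_bound n k b beta.
Proof.
  intros Hind.
  destruct (SquareMatrix.injective_left_inverse k (gram n b) (gram_injective n k b Hind)) as [N HN].
  exists (rsum k (fun i => rsum n (fun l => Rabs (lin k (N i) b l)))).
  split; [apply rsum_nonneg; intros; apply rsum_nonneg; intros; apply Rabs_pos|].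
  intros c r Hr Hc i Hi. rewrite (lin_coord_dual n k b N c i HN Hi).
  eapply Rle_trans; [apply rsum_abs|].
  apply Rle_trans with (rsum n (fun l => Rabs (lin k (N i) b l)) * r).
  - rewrite <- rsum_scal_r. apply rsum_le. intros l Hl. rewrite Rabs_mult.
    apply Rmult_le_compat_l; [apply Rabs_pos|]. apply Hc; auto.
  - apply Rmult_le_compat_r; auto.
    apply (rsum_term_le k (fun i => rsum n (fun l => Rabs (lin k (N i) b l)))); auto.
    intros; apply rsum_nonneg; intros; apply Rabs_pos.
Qed.

Lemma vnorm_bnd n x r : vnorm n x <= r -> bnd n x r.
Proof.
  intros H l Hl. eapply Rle_trans; [|exact H]. unfold vnorm.
  rewrite <- sqrt_Rsqr_abs. apply sqrt_le_1_alt. unfold Rsqr.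
  replace (x l * x l) with (x l ^ 2) by ring.
  apply (rsum_term_le n (fun i => x i ^ 2)); auto. intros; apply pow2_ge_0.
Qed.

Lemma bnd_vnorm n x r : 0 <= r -> bnd n x r -> vnorm n x <= (INR n + 1) * r.
Proof.
  intros Hr H. unfold vnorm. assert (0 <= INR n) by apply pos_INR.
  rewrite <- (sqrt_Rsqr ((INR n + 1) * r)) by nra. apply sqrt_le_1_alt.
  apply Rle_trans with (rsum n (fun _ => r * r)).
  - apply rsum_le. intros l Hl. specialize (H l Hl).
    rewrite <- Rsqr_pow2, Rsqr_abs. unfold Rsqr. pose proof (Rabs_pos (x l)). nra.
  - rewrite rsum_const. unfold Rsqr. nra.
Qed.

(** * Polynomial growth *)

Definition poly_growth (f : R -> R) (k : nat) : Prop :=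
  exists c C r0, 0 < c /\ forall r, r0 <= r -> c * r ^ k <= f r <= C * r ^ k.

Lemma poly_growth_pow k : poly_growth (fun r => r ^ k) k.
Proof. exists 1, 1, 0. split; [lra|]. intros r _. lra. Qed.

Lemma bigO_of_le (f g : R -> R) C r0 : (forall r, r0 <= r -> 0 < g r /\ f r <= C * g r) -> bigO f g.
Proof.
  intros H. exists C, r0. intros r Hr. destruct (H r Hr) as [Hg Hf].
  apply (Rmult_le_reg_r (g r)); auto. unfold Rdiv. rewrite Rmult_assoc, Rinv_l by lra. lra.
Qed.

Lemma bigO_le (f g : R -> R) : bigO f g -> exists C r0, forall r, r0 <= r -> 0 < g r -> f r <= C * g r.
Proof.
  intros [C [r0 H]]. exists C, r0. intros r Hr Hg. specialize (H r Hr).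
  apply (Rmult_le_compat_r (g r)) in H; [|lra].
  unfold Rdiv in H. rewrite Rmult_assoc, Rinv_l in H by lra. lra.
Qed.

Lemma poly_growth_bigO f g k : poly_growth f k -> poly_growth g k -> bigO f g.
Proof.
  intros [c [C [r0 [Hc Hf]]]] [c' [C' [r0' [Hc' Hg]]]].
  apply (bigO_of_le f g (C / c') (Rmax 1 (Rmax r0 r0'))). intros r Hr.
  pose proof (Rmax_l 1 (Rmax r0 r0')). pose proof (Rmax_r 1 (Rmax r0 r0')).
  pose proof (Rmax_l r0 r0'). pose proof (Rmax_r r0 r0').
  assert (Hrk : 0 < r ^ k) by (apply pow_lt; lra).
  destruct (Hf r ltac:(lra)) as [F1 F2]. destruct (Hg r ltac:(lra)) as [G1 _].
  split; [nra|].
  apply Rle_trans with (C * r ^ k); auto.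
  replace (C * r ^ k) with (C / c' * (c' * r ^ k)) by (field; lra).
  assert (0 <= C) by nra. apply Rmult_le_compat_l; auto.
  apply Rmult_le_pos; [lra|]. left. apply Rinv_0_lt_compat. lra.
Qed.

Lemma poly_growth_bigTheta f g k : poly_growth f k -> poly_growth g k -> bigTheta f g.
Proof. intros Hf Hg. split; apply (poly_growth_bigO _ _ k); auto. Qed.

Lemma pow_dominated_le k d a K r0 : 0 < a -> (forall t, r0 <= t -> a * t ^ k <= K * t ^ d) -> (k <= d)%nat.
Proof.
  intros Ha H. destruct (le_lt_dec k d) as [|Hlt]; auto. exfalso.
  pose (t := Rmax (Rmax r0 1) (Rabs K / a + 1)).
  assert (T1 : r0 <= t) by (unfold t; eapply Rle_trans; [apply Rmax_l|apply Rmax_l]).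
  assert (T2 : 1 <= t) by (unfold t; eapply Rle_trans; [apply Rmax_r|apply Rmax_l]).
  assert (T3 : Rabs K / a + 1 <= t) by (unfold t; apply Rmax_r).
  specialize (H t T1).
  (* at [t] we have [a t > |K|], so [a t^k >= a t t^d > K t^d] *)
  replace k with (S (k - d - 1) + d)%nat in H by lia. rewrite pow_add in H. simpl in H.
  assert (P1 : 1 <= t ^ (k - d - 1)) by (apply pow_R1_Rle; lra).
  assert (P2 : 0 < t ^ d) by (apply pow_lt; lra).
  assert (P3 : Rabs K < a * t).
  { assert (Rabs K / a * a = Rabs K) by (field; lra). nra. }
  pose proof (Rle_abs K).
  assert (0 < (a * t - K) * t ^ d) by (apply Rmult_lt_0_compat; lra).
  assert (0 <= a * t * t ^ d * (t ^ (k - d - 1) - 1))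
    by (apply Rmult_le_pos; [apply Rmult_le_pos|]; nra).
  nra.
Qed.

Lemma poly_growth_bigTheta_pow_eq f k d : poly_growth f k -> bigTheta f (fun r => r ^ d) -> k = d.
Proof.
  intros [c [C [r0 [Hc Hf]]]] [O1 O2].
  destruct (bigO_le _ _ O1) as [K1 [r1 H1]]. destruct (bigO_le _ _ O2) as [K2 [r2 H2]].
  set (t0 := Rmax 1 (Rmax r0 (Rmax r1 r2))).
  assert (Ht0 : forall t, t0 <= t -> 0 < t ^ k /\ 0 < t ^ d /\ r0 <= t /\ r1 <= t /\ r2 <= t).
  { intros t Ht. unfold t0 in Ht.
    pose proof (Rmax_l 1 (Rmax r0 (Rmax r1 r2))). pose proof (Rmax_r 1 (Rmax r0 (Rmax r1 r2))).
    pose proof (Rmax_l r0 (Rmax r1 r2)). pose proof (Rmax_r r0 (Rmax r1 r2)).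
    pose proof (Rmax_l r1 r2). pose proof (Rmax_r r1 r2).
    split; [|split]; [apply pow_lt; lra|apply pow_lt; lra|lra]. }
  apply Nat.le_antisymm.
  - apply (pow_dominated_le k d c K1 t0); auto. intros t Ht.
    destruct (Ht0 t Ht) as [_ [Hd [T0 [T1 _]]]].
    eapply Rle_trans; [apply Hf|apply H1]; auto.
  - apply (pow_dominated_le d k 1 (Rabs K2 * C) t0); [lra|]. intros t Ht.
    destruct (Ht0 t Ht) as [Hk [_ [T0 [_ T2]]]]. destruct (Hf t T0) as [F1 F2].
    assert (Hfpos : 0 < f t) by nra.
    specialize (H2 t T2 Hfpos). pose proof (Rle_abs K2). pose proof (Rabs_pos K2).
    assert (K2 * f t <= Rabs K2 * f t) by (apply Rmult_le_compat_r; lra).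
    assert (Rabs K2 * f t <= Rabs K2 * (C * t ^ k)) by (apply Rmult_le_compat_l; lra).
    lra.
Qed.

Lemma poly_growth_unique f k d : poly_growth f k -> poly_growth f d -> k = d.
Proof.
  intros Hk Hd. apply (poly_growth_bigTheta_pow_eq f); auto.
  apply (poly_growth_bigTheta _ _ d); auto. apply poly_growth_pow.
Qed.

(** * Growth of a cocompact translation pair *)

Definition NV_set (n : nat) (G : Isom -> Prop) (V : Vec -> Prop) (r : R) : Isom -> Prop :=
  fun g => G g /\ exists t, translates_V_by n V g t /\ vnorm n t <= r.
Definition N_set (n : nat) (H : Isom -> Prop) (r : R) : Isom -> Prop :=
  fun g => H g /\ vnorm n (Tr g) <= r.

Section TranslationPair.

Variables (n k : nat) (Gam G : Isom -> Prop) (V : Vec -> Prop) (p : Vec) (b : nat -> Vec).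
Hypothesis Gam_discrete : discrete_subgroup n Gam.
Hypothesis G_sub_Gam : forall g, G g -> Gam g.
Hypothesis G_preserves_V : forall g x, G g -> V x -> V (act n g x).
Hypothesis G_translates_V : forall g, G g -> exists t, translates_V_by n V g t.
Hypothesis V_param : forall x, V x <-> exists c, x = fun j => p j + lin k c b j.
Hypothesis b_indep : indep n k b.
Variable cosets : list Isom.
Hypothesis cosets_Gam : forall c, In c cosets -> Gam c.
Hypothesis cosets_cover : forall g, Gam g -> exists c h, In c cosets /\ G h /\ g = comp_isom n c h.
Variables (K : Vec -> Prop) (M : R).
Hypothesis K_V : forall y, K y -> V y.
Hypothesis K_bounded : forall y, K y -> vnorm n y <= M.
Hypothesis K_cover : forall x, V x -> exists g y, G g /\ K y /\ act n g y = x.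

Definition transl (g : Isom) : Vec := fun l => act n g p l - p l.

Lemma V_base : V p.
Proof.
  apply V_param. exists (fun _ => 0). apply functional_extensionality. intros j.
  unfold lin. rewrite rsum_eq0; [ring|]. intros; ring.
Qed.

Lemma G_in_En g : G g -> in_En n g.
Proof. intros Hg. apply (proj1 (proj1 Gam_discrete)). auto. Qed.

Lemma act_V_transl g x l : G g -> V x -> act n g x l = x l + transl g l.
Proof.
  intros Hg Hx. destruct (G_translates_V g Hg) as [t Ht].
  unfold transl. rewrite (Ht x Hx), (Ht p V_base). unfold vadd. ring.
Qed.

Lemma translates_V_transl g : G g -> translates_V_by n V g (transl g).
Proof. intros Hg x Hx. apply functional_extensionality. intros l. apply act_V_transl; auto. Qed.

Lemma translates_V_eq_transl g t : translates_V_by n V g t -> t = transl g.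
Proof.
  intros Ht. apply functional_extensionality. intros l.
  unfold transl. rewrite (Ht p V_base). unfold vadd. ring.
Qed.

Definition coef (g : Isom) : nat -> R :=
  epsilon (inhabits (fun _ => 0)) (fun c => forall l, transl g l = lin k c b l).

Lemma transl_coef g : G g -> forall l, transl g l = lin k (coef g) b l.
Proof.
  intros Hg. apply (epsilon_spec _ (fun c => forall l, transl g l = lin k c b l)).
  destruct (proj1 (V_param _) (G_preserves_V g p Hg V_base)) as [c Hc].
  exists c. intros l. unfold transl. rewrite Hc. ring.
Qed.

Definition pnorm := rsum n (fun l => Rabs (p l)).
Definition bnorm := rsum k (fun i => rsum n (fun l => Rabs (b i l))).

Lemma pnorm_nonneg : 0 <= pnorm.
Proof. apply rsum_nonneg. intros; apply Rabs_pos. Qed.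

Lemma bnorm_nonneg : 0 <= bnorm.
Proof. apply rsum_nonneg. intros. apply rsum_nonneg. intros; apply Rabs_pos. Qed.

Lemma snd_transl (g : Isom) l : snd g l = transl g l + p l - rsum n (fun j => fst g l j * p j).
Proof. unfold transl, act. cbv beta. ring. Qed.

Lemma transl_snd_close g l : G g -> (l < n)%nat -> Rabs (transl g l - snd g l) <= 2 * pnorm.
Proof.
  intros Hg Hl. rewrite (snd_transl g l).
  replace (transl g l - (transl g l + p l - rsum n (fun j => fst g l j * p j)))
    with (rsum n (fun j => fst g l j * p j) + - p l) by ring.
  eapply Rle_trans; [apply Rabs_triang|]. rewrite Rabs_Ropp.
  pose proof (orth_mul_abs_le n (fst g) p l (in_En_orth_cols n g (G_in_En g Hg)) Hl).
  pose proof (rsum_abs_term_le n p l Hl). unfold pnorm. lra.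
Qed.

Lemma transl_bnd_of_snd g r : G g -> bnd n (snd g) r -> bnd n (transl g) (r + 2 * pnorm).
Proof.
  intros Hg Hb l Hl. pose proof (transl_snd_close g l Hg Hl). pose proof (Hb l Hl).
  replace (transl g l) with (snd g l + (transl g l - snd g l)) by ring.
  eapply Rle_trans; [apply Rabs_triang|]. lra.
Qed.

Lemma snd_bnd_of_transl g r : G g -> bnd n (transl g) r -> bnd n (snd g) (r + 2 * pnorm).
Proof.
  intros Hg Hb l Hl. pose proof (transl_snd_close g l Hg Hl). pose proof (Hb l Hl).
  replace (snd g l) with (transl g l + - (transl g l - snd g l)) by ring.
  eapply Rle_trans; [apply Rabs_triang|]. rewrite Rabs_Ropp. lra.
Qed.

(* Rounding the linear part to mesh [sA] and the coordinates of [transl g] to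
   mesh [s]; for small meshes equal codes force closeness in E(n). *)
Definition code (sA s : R) (g : Isom) : list Z * list Z :=
  (map (fun ij => Int_part (fst g (fst ij) (snd ij) / sA)) (list_prod (seq 0 n) (seq 0 n)),
   map (fun i => Int_part (coef g i / s)) (seq 0 k)).

Lemma code_eq_close sA s g h : 0 < sA -> 0 < s -> G g -> G h -> code sA s g = code sA s h ->
  isom_close n (sA * (pnorm + 1) + s * (bnorm + 1)) g h.
Proof.
  intros HsA Hs Hg Hh E. unfold code in E. injection E as E1 E2.
  pose proof pnorm_nonneg. pose proof bnorm_nonneg.
  assert (HA : forall i j, (i < n)%nat -> (j < n)%nat -> Rabs (fst g i j - fst h i j) < sA).
  { intros i j Hi Hj. apply Rabs_sub_lt_of_div; auto. apply Int_part_eq_close.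
    apply (proj1 map_ext_in_iff E1 (i, j)). apply in_prod; apply in_seq; lia. }
  assert (HC : forall i, (i < k)%nat -> Rabs (coef g i - coef h i) <= s).
  { intros i Hi. left. apply Rabs_sub_lt_of_div; auto. apply Int_part_eq_close.
    apply (proj1 map_ext_in_iff E2). apply in_seq. lia. }
  split.
  - intros i j Hi Hj. specialize (HA i j Hi Hj). nra.
  - intros l Hl.
    replace (snd g l - snd h l)
      with (lin k (fun i => coef g i - coef h i) b l - rsum n (fun j => (fst g l j - fst h l j) * p j)).
    2:{ rewrite lin_minus, <- (transl_coef g Hg), <- (transl_coef h Hh), (snd_transl g l), (snd_transl h l).
        rewrite (rsum_ext n _ (fun j => fst g l j * p j - fst h l j * p j)) by (intros; ring).
        rewrite rsum_minus. ring. }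
    eapply Rle_lt_trans; [apply Rabs_triang|]. rewrite Rabs_Ropp.
    pose proof (lin_abs_le n k _ b s l HC Hl) as X1.
    assert (X2 : Rabs (rsum n (fun j => (fst g l j - fst h l j) * p j)) <= sA * pnorm).
    { eapply Rle_trans; [apply rsum_abs|]. unfold pnorm. rewrite <- rsum_scal.
      apply rsum_le. intros j Hj. rewrite Rabs_mult. apply Rmult_le_compat_r; [apply Rabs_pos|].
      left. apply HA; auto. }
    apply Rle_lt_trans with (s * bnorm + sA * pnorm); [apply Rplus_le_compat; assumption|nra].
Qed.

Lemma code_injective : exists sA s, 0 < sA /\ 0 < s /\
  forall g h, G g -> G h -> code sA s g = code sA s h -> g = h.
Proof.
  destruct (discrete_subgroup_uniform n Gam Gam_discrete) as [eps [Heps Huniform]].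
  pose proof pnorm_nonneg. pose proof bnorm_nonneg.
  exists (eps / (2 * (pnorm + 1))), (eps / (2 * (bnorm + 1))).
  split; [apply Rdiv_lt_0_compat; lra|]. split; [apply Rdiv_lt_0_compat; lra|].
  intros g h Hg Hh E. apply Huniform; auto.
  replace eps with (eps / (2 * (pnorm + 1)) * (pnorm + 1) + eps / (2 * (bnorm + 1)) * (bnorm + 1))
    by (field; lra).
  apply code_eq_close; auto; apply Rdiv_lt_0_compat; lra.
Qed.

Lemma code_in_box sA s beta r g :
  0 < sA -> 0 < s -> 0 <= r -> 0 <= beta -> coord_bound n k b beta -> G g -> bnd n (transl g) r ->
  In (code sA s g)
     (list_prod (zbox (n * n) (S (nat_ceil (1 / sA)))) (zbox k (S (nat_ceil (beta / s * r))))).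
Proof.
  intros HsA Hs Hr Hbeta0 Hbeta Hg Hb. apply in_prod; apply in_zbox.
  - rewrite length_map, length_prod, length_seq. reflexivity.
  - intros z Hz. apply in_map_iff in Hz. destruct Hz as [[i j] [<- Hij]].
    apply in_prod_iff in Hij. destruct Hij as [Hi Hj]. apply in_seq in Hi, Hj.
    apply Int_part_abs_le. eapply Rle_trans; [apply (Rabs_div_le sA _ 1); auto|].
    + apply (orth_entry_le1 n); [apply in_En_orth_cols, G_in_En|..]; simpl; auto; lia.
    + apply nat_ceil_spec. left. apply Rdiv_lt_0_compat; lra.
  - rewrite length_map, length_seq. reflexivity.
  - intros z Hz. apply in_map_iff in Hz. destruct Hz as [i [<- Hi]]. apply in_seq in Hi.
    apply Int_part_abs_le. eapply Rle_trans; [apply (Rabs_div_le s _ (beta * r)); auto|].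
    + apply (Hbeta _ r); [auto| |lia]. intros l Hl. rewrite <- transl_coef; auto.
    + replace (beta * r / s) with (beta / s * r) by (field; lra). apply nat_ceil_spec.
      apply Rmult_le_pos; auto. apply Rmult_le_pos; [lra|]. left. apply Rinv_0_lt_compat; lra.
Qed.

Lemma transl_ball_code : exists (e : Isom -> list Z * list Z) C,
  (forall g h, G g -> G h -> e g = e h -> g = h) /\
  forall r, 1 <= r -> exists L, (forall g, G g -> bnd n (transl g) r -> In (e g) L) /\
    INR (length L) <= C * r ^ k.
Proof.
  destruct code_injective as [sA [s [HsA [Hs Hinj]]]].
  destruct (lin_coord_bound n k b b_indep) as [beta [Hbeta0 Hbeta]].
  assert (Hbs : 0 <= beta / s) by (apply Rmult_le_pos; [lra|]; left; apply Rinv_0_lt_compat; lra).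
  exists (code sA s), (INR (length (zbox (n * n) (S (nat_ceil (1 / sA))))) * (2 * (beta / s) + 5) ^ k).
  split; auto. intros r Hr. eexists. split.
  - intros g Hg Hb. apply (code_in_box sA s beta r g); auto. lra.
  - rewrite length_prod, mult_INR, Rmult_assoc. apply Rmult_le_compat_l; [apply pos_INR|].
    apply length_zbox_ceil_le; auto.
Qed.

Lemma NV_count_upper : exists C, forall r, 1 <= r ->
  finite_pred (NV_set n G V r) /\ NV_count n G V r <= C * r ^ k.
Proof.
  destruct transl_ball_code as [e [C [Hinj Hball]]]. exists C. intros r Hr.
  destruct (Hball r Hr) as [L [HL Hlen]].
  apply (INR_card_of_le_code _ e L); auto.
  - intros g [Hg [t [Ht Htn]]]. apply HL; auto.
    rewrite <- (translates_V_eq_transl g t Ht). apply vnorm_bnd; auto.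
  - intros g h [Hg _] [Hh _]. apply Hinj; auto.
Qed.

Lemma N_count_G_upper : exists C, forall r, 1 <= r ->
  finite_pred (N_set n G r) /\ N_count n G r <= C * r ^ k.
Proof.
  destruct transl_ball_code as [e [C [Hinj Hball]]]. pose proof pnorm_nonneg.
  exists (C * (1 + 2 * pnorm) ^ k). intros r Hr.
  destruct (Hball ((1 + 2 * pnorm) * r) ltac:(nra)) as [L [HL Hlen]].
  apply (INR_card_of_le_code _ e L); auto.
  - intros g [Hg Hgr]. apply HL; auto.
    eapply bnd_le; [apply (transl_bnd_of_snd g r Hg), vnorm_bnd; auto|]. nra.
  - intros g h [Hg _] [Hh _]. apply Hinj; auto.
  - rewrite Rpow_mult_distr, <- Rmult_assoc in Hlen. exact Hlen.
Qed.

Definition coset_split (g : Isom) : Isom * Isom :=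
  epsilon (inhabits (g, g))
    (fun ch => In (fst ch) cosets /\ G (snd ch) /\ g = comp_isom n (fst ch) (snd ch)).

Lemma coset_split_spec g : Gam g -> In (fst (coset_split g)) cosets /\
  G (snd (coset_split g)) /\ g = comp_isom n (fst (coset_split g)) (snd (coset_split g)).
Proof.
  intros Hg. apply (epsilon_spec (inhabits (g, g))
    (fun ch => In (fst ch) cosets /\ G (snd ch) /\ g = comp_isom n (fst ch) (snd ch))).
  destruct (cosets_cover g Hg) as [c [h H]]. exists (c, h). exact H.
Qed.

Definition coset_shift : R := fold_right Rplus 0 (map (fun c => rsum n (fun j => Rabs (snd c j))) cosets).

Lemma coset_shift_nonneg : 0 <= coset_shift.
Proof.
  apply sum_map_nonneg. intros c. apply rsum_nonneg. intros; apply Rabs_pos.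
Qed.

Lemma snd_coset_split_bnd g r : Gam g -> vnorm n (snd g) <= r ->
  bnd n (snd (snd (coset_split g))) (INR n * r + coset_shift).
Proof.
  intros Hg Hgr i Hi. destruct (coset_split_spec g Hg) as [Hc [Hh Eg]].
  set (c := fst (coset_split g)) in *. set (h := snd (coset_split g)) in *.
  assert (Ec : in_En n c) by (apply (proj1 (proj1 Gam_discrete)), cosets_Gam; auto).
  pose proof (in_En_orth_cols n c Ec) as Oc.
  rewrite <- (orth_transpose_mul n (fst c) (snd h) i Oc Hi).
  rewrite (rsum_ext n _ (fun j => fst c j i * (snd g j - snd c j))).
  2:{ intros j Hj. rewrite Eg. simpl. unfold act. ring. }
  eapply Rle_trans; [apply orth_transpose_mul_abs_le; auto|].
  apply Rle_trans with (rsum n (fun j => Rabs (snd g j) + Rabs (snd c j))).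
  - apply rsum_le. intros j Hj. rewrite <- (Rabs_Ropp (snd c j)). apply Rabs_triang.
  - rewrite rsum_plus. apply Rplus_le_compat.
    + rewrite <- rsum_const. apply rsum_le. intros j Hj. apply (vnorm_bnd n (snd g) r); auto.
    + apply (In_le_sum_map (fun c => rsum n (fun j => Rabs (snd c j)))); auto.
      intros; apply rsum_nonneg; intros; apply Rabs_pos.
Qed.

Lemma N_count_Gam_upper : exists C, forall r, 1 <= r ->
  finite_pred (N_set n Gam r) /\ N_count n Gam r <= C * r ^ k.
Proof.
  destruct transl_ball_code as [e [C [Hinj Hball]]].
  pose proof pnorm_nonneg. pose proof coset_shift_nonneg. pose proof (pos_INR n).
  pose (scale := INR n + coset_shift + 2 * pnorm + 1).
  exists (INR (length cosets) * C * scale ^ k). intros r Hr.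
  destruct (Hball (scale * r) ltac:(unfold scale; nra)) as [L [HL Hlen]].
  apply (INR_card_of_le_code _ (fun g => (fst (coset_split g), e (snd (coset_split g))))
           (list_prod cosets L)).
  - intros g [Hg Hgr]. destruct (coset_split_spec g Hg) as [Hc [Hh _]].
    apply in_prod; auto. apply HL; auto.
    eapply bnd_le; [apply (transl_bnd_of_snd _ (INR n * r + coset_shift) Hh), snd_coset_split_bnd; auto|].
    unfold scale. nra.
  - intros g g' [Hg _] [Hg' _] E. injection E as E1 E2.
    destruct (coset_split_spec g Hg) as [_ [Hh Eg]].
    destruct (coset_split_spec g' Hg') as [_ [Hh' Eg']].
    rewrite Eg, Eg', E1, (Hinj _ _ Hh Hh' E2). reflexivity.
  - rewrite length_prod, mult_INR, Rpow_mult_distr in *.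
    rewrite !Rmult_assoc. apply Rmult_le_compat_l; [apply pos_INR|]. lra.
Qed.

Definition grid_point (sigma : R) (N j : nat) : Vec :=
  fun l => p l + lin k (fun i => sigma * INR (digit N i j)) b l.

Definition grid_elt (sigma : R) (N j : nat) : Isom * Vec :=
  epsilon (inhabits (id_isom n, p))
    (fun gy => G (fst gy) /\ K (snd gy) /\ act n (fst gy) (snd gy) = grid_point sigma N j).

Lemma grid_elt_spec sigma N j : G (fst (grid_elt sigma N j)) /\ K (snd (grid_elt sigma N j)) /\
  act n (fst (grid_elt sigma N j)) (snd (grid_elt sigma N j)) = grid_point sigma N j.
Proof.
  apply (epsilon_spec (inhabits (id_isom n, p))
    (fun gy => G (fst gy) /\ K (snd gy) /\ act n (fst gy) (snd gy) = grid_point sigma N j)).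
  destruct (K_cover (grid_point sigma N j)) as [g [y H]].
  - apply V_param. eexists. reflexivity.
  - exists (g, y). exact H.
Qed.

Lemma transl_grid_elt sigma N j l :
  transl (fst (grid_elt sigma N j)) l = grid_point sigma N j l - snd (grid_elt sigma N j) l.
Proof.
  destruct (grid_elt_spec sigma N j) as [Hg [Hy E]].
  rewrite <- E, (act_V_transl _ _ l Hg (K_V _ Hy)). ring.
Qed.

Lemma K_bnd y : K y -> bnd n y (Rabs M).
Proof. intros Hy. eapply bnd_le; [apply vnorm_bnd, K_bounded, Hy|]. apply Rle_abs. Qed.

(* Two grid points whose selected isometries agree differ by at most [2 |M|],
   which the mesh [sigma] of the grid forbids unless they coincide. *)
Lemma grid_elt_injective beta sigma N j j' :
  0 <= beta -> coord_bound n k b beta -> 2 * Rabs M * beta < sigma ->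
  (1 <= N)%nat -> (j < N ^ k)%nat -> (j' < N ^ k)%nat ->
  fst (grid_elt sigma N j) = fst (grid_elt sigma N j') -> j = j'.
Proof.
  intros Hbeta0 Hbeta Hsigma HN Hj Hj' E.
  assert (HM : 0 <= 2 * Rabs M) by (pose proof (Rabs_pos M); lra).
  assert (Hb : bnd n (lin k (fun i => sigma * INR (digit N i j) - sigma * INR (digit N i j')) b)
                 (2 * Rabs M)).
  { intros l Hl. rewrite lin_minus.
    replace (lin k (fun i => sigma * INR (digit N i j)) b l - lin k (fun i => sigma * INR (digit N i j')) b l)
      with (snd (grid_elt sigma N j) l - snd (grid_elt sigma N j') l).
    2:{ pose proof (transl_grid_elt sigma N j l) as T. pose proof (transl_grid_elt sigma N j' l) as T'.
        rewrite E in T. unfold grid_point in T, T'. lra. }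
    destruct (grid_elt_spec sigma N j) as [_ [Hy _]]. destruct (grid_elt_spec sigma N j') as [_ [Hy' _]].
    pose proof (K_bnd _ Hy l Hl). pose proof (K_bnd _ Hy' l Hl).
    eapply Rle_trans; [apply Rabs_triang|]. rewrite Rabs_Ropp. lra. }
  apply (digits_inj N k ltac:(lia) j j' Hj Hj'). intros i Hi. apply INR_eq_of_close.
  pose proof (Hbeta _ _ HM Hb i Hi) as X. cbv beta in X.
  rewrite <- Rmult_minus_distr_l, Rabs_mult in X.
  assert (0 < sigma) by (pose proof (Rabs_pos M); nra).
  rewrite (Rabs_pos_eq sigma) in X by lra.
  apply (Rmult_lt_reg_l sigma); auto. nra.
Qed.

Lemma grid_elt_transl_bnd sigma N j : 0 <= sigma -> (1 <= N)%nat ->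
  bnd n (transl (fst (grid_elt sigma N j))) ((pnorm + sigma * bnorm + Rabs M) * INR N).
Proof.
  intros Hsigma HN l Hl. rewrite transl_grid_elt. unfold grid_point.
  assert (HN1 : 1 <= INR N) by (apply (le_INR 1); auto).
  assert (L1 : Rabs (lin k (fun i => sigma * INR (digit N i j)) b l) <= sigma * INR N * bnorm).
  { apply lin_abs_le; auto. intros i Hi. rewrite Rabs_mult, Rabs_pos_eq, Rabs_pos_eq by (auto; apply pos_INR).
    apply Rmult_le_compat_l; auto. apply le_INR. pose proof (digit_lt N i j HN). lia. }
  destruct (grid_elt_spec sigma N j) as [_ [Hy _]]. pose proof (K_bnd _ Hy l Hl).
  pose proof (rsum_abs_term_le n p l Hl). pose proof pnorm_nonneg. pose proof bnorm_nonneg.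
  pose proof (Rabs_pos M). fold pnorm in *.
  unfold Rminus. eapply Rle_trans; [apply Rabs_triang|]. rewrite Rabs_Ropp.
  eapply Rle_trans; [apply Rplus_le_compat_r, Rabs_triang|]. nra.
Qed.

Lemma grid_lower : exists c0 r0, 0 < c0 /\ forall r, r0 <= r ->
  exists l, NoDup l /\ c0 * r ^ k <= INR (length l) /\
    forall g, In g l -> G g /\ vnorm n (snd g) <= r /\ vnorm n (transl g) <= r.
Proof.
  destruct (lin_coord_bound n k b b_indep) as [beta [Hbeta0 Hbeta]].
  pose proof pnorm_nonneg. pose proof bnorm_nonneg. pose proof (Rabs_pos M). pose proof (pos_INR n).
  set (sigma := 2 * Rabs M * beta + 1).
  assert (Hsigma : 0 <= sigma) by (unfold sigma; nra).
  set (a := pnorm + sigma * bnorm + Rabs M).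
  assert (Ha : 0 <= a) by (unfold a; nra).
  set (D := (INR n + 1) * (a + 2 * pnorm + 1)).
  assert (HD : 0 < D) by (unfold D; nra).
  exists ((/ (2 * D)) ^ k), (2 * D). split; [apply pow_lt, Rinv_0_lt_compat; lra|].
  intros r Hr. destruct (exists_nat_scale D r HD Hr) as [N [HN [HDN HNr]]].
  assert (HN1 : 1 <= INR N) by (apply (le_INR 1); auto).
  exists (map (fun j => fst (grid_elt sigma N j)) (seq 0 (N ^ k))). split; [|split].
  - apply NoDup_map_NoDup_ForallPairs; [|apply seq_NoDup]. intros j j' Hj Hj'. apply in_seq in Hj, Hj'.
    apply (grid_elt_injective beta); auto; [unfold sigma; lra|lia|lia].
  - rewrite length_map, length_seq, pow_INR, <- Rpow_mult_distr. apply pow_incr. split.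
    + apply Rmult_le_pos; [left; apply Rinv_0_lt_compat|]; lra.
    + replace (/ (2 * D) * r) with (r / (2 * D)) by (field; lra). exact HNr.
  - intros g Hg. apply in_map_iff in Hg. destruct Hg as [j [<- _]].
    destruct (grid_elt_spec sigma N j) as [HG _].
    pose proof (grid_elt_transl_bnd sigma N j Hsigma HN) as Ht. fold a in Ht.
    split; [auto|split].
    + eapply Rle_trans; [apply bnd_vnorm; [|apply (snd_bnd_of_transl _ _ HG Ht)]; nra|].
      apply Rle_trans with (D * INR N); auto.
      unfold D. rewrite Rmult_assoc. apply Rmult_le_compat_l; nra.
    + eapply Rle_trans; [apply bnd_vnorm; [|exact Ht]; nra|].
      apply Rle_trans with (D * INR N); auto.
      unfold D. rewrite Rmult_assoc. apply Rmult_le_compat_l; nra.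
Qed.

Lemma poly_growth_of_bounds f : (exists C, forall r, 1 <= r -> f r <= C * r ^ k) ->
  (exists c r0, 0 < c /\ forall r, r0 <= r -> c * r ^ k <= f r) -> poly_growth f k.
Proof.
  intros [C HC] [c [r0 [Hc Hf]]]. exists c, C, (Rmax 1 r0). split; auto. intros r Hr.
  pose proof (Rmax_l 1 r0). pose proof (Rmax_r 1 r0). split; [apply Hf|apply HC]; lra.
Qed.

Lemma counts_poly_growth :
  poly_growth (NV_count n G V) k /\ poly_growth (N_count n G) k /\ poly_growth (N_count n Gam) k.
Proof.
  destruct NV_count_upper as [C1 H1]. destruct N_count_G_upper as [C2 H2].
  destruct N_count_Gam_upper as [C3 H3]. destruct grid_lower as [c [r0 [Hc Hgrid]]].
  assert (Hlow : forall P : R -> Isom -> Prop, (forall r, 1 <= r -> finite_pred (P r)) ->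
            (forall r g, G g -> vnorm n (snd g) <= r -> vnorm n (transl g) <= r -> P r g) ->
            exists c r0, 0 < c /\ forall r, r0 <= r -> c * r ^ k <= INR (card_of (P r))).
  { intros P Hfin HP. exists c, (Rmax 1 r0). split; auto. intros r Hr.
    pose proof (Rmax_l 1 r0). pose proof (Rmax_r 1 r0).
    destruct (Hgrid r ltac:(lra)) as [l [Hl [Hlen Hin]]].
    eapply Rle_trans; [exact Hlen|]. apply le_INR, NoDup_length_le_card_of; auto.
    - apply Hfin. lra.
    - intros g Hg. destruct (Hin g Hg) as [HG [Hs Ht]]. auto. }
  split; [|split]; apply poly_growth_of_bounds.
  - exists C1. apply H1.
  - apply (Hlow (NV_set n G V)); [apply H1|]. intros r g Hg _ Ht.
    split; auto. exists (transl g). split; auto. apply translates_V_transl; auto.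
  - exists C2. apply H2.
  - apply (Hlow (N_set n G)); [apply H2|]. intros r g Hg Hs _. split; auto.
  - exists C3. apply H3.
  - apply (Hlow (N_set n Gam)); [apply H3|]. intros r g Hg Hs _. split; auto.
Qed.

End TranslationPair.

Lemma fi_translation_pair_poly_growth n Gam G V k :
  discrete_subgroup n Gam -> affine_subspace n k V -> fi_cocompact_translation_pair n Gam G V ->
  poly_growth (NV_count n G V) k /\ poly_growth (N_count n G) k /\ poly_growth (N_count n Gam) k.
Proof.
  intros Hd [p [b [_ [Hb [Hind HV]]]]]
    [[_ [HGGam [HGV [K [M [HKV [HKM HKcover]]]]]]] [cosets [Hcosets Hcover]]].
  apply (counts_poly_growth n k Gam G V p b Hd HGGam) with cosets K M; auto.
  - intros g x Hg Hx. apply (proj1 (HGV g Hg)), Hx.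
  - intros g Hg. apply (proj2 (proj2 (HGV g Hg))).
  - split; auto.
Qed.

Lemma dim_Gamma_poly_growth n Gam d :
  discrete_subgroup n Gam -> dim_Gamma n Gam d -> poly_growth (N_count n Gam) d.
Proof.
  intros Hd [G [V [HV Hpair]]]. apply (fi_translation_pair_poly_growth n Gam G V d); auto.
Qed.

Theorem mainTheorem8 (n : nat) (Gam G : Isom -> Prop) (V : Vec -> Prop) (k : nat) :
  discrete_subgroup n Gam ->
  affine_subspace n k V ->
  fi_cocompact_translation_pair n Gam G V ->
  bigTheta (N_count n Gam) (N_count n G) /\
  bigTheta (N_count n G) (NV_count n G V) /\
  bigTheta (NV_count n G V) (fun r => r ^ k) /\
  (forall d, dim_Gamma n Gam d -> bigTheta (fun r => r ^ k) (fun r => r ^ d)) /\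
  (forall d, dim_Gamma n Gam d <-> bigTheta (N_count n Gam) (fun r => r ^ d)).
Proof.
  intros Hd HV Hpair.
  destruct (fi_translation_pair_poly_growth n Gam G V k Hd HV Hpair) as [HNV [HNG HNGam]].
  assert (Hk : forall d, dim_Gamma n Gam d -> k = d).
  { intros d Hdim. apply (poly_growth_unique (N_count n Gam)); auto.
    apply dim_Gamma_poly_growth; auto. }
  split; [|split; [|split; [|split]]].
  - apply (poly_growth_bigTheta _ _ k); auto.
  - apply (poly_growth_bigTheta _ _ k); auto.
  - apply (poly_growth_bigTheta _ _ k); auto. apply poly_growth_pow.
  - intros d Hdim. rewrite <- (Hk d Hdim).
    apply (poly_growth_bigTheta _ _ k); apply poly_growth_pow.
  - intros d. split.
    + intros Hdim. rewrite <- (Hk d Hdim).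
      apply (poly_growth_bigTheta _ _ k); auto. apply poly_growth_pow.
    + intros Htheta. rewrite <- (poly_growth_bigTheta_pow_eq _ _ _ HNGam Htheta).
      exists G, V. auto.
Qed.
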